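(* For any compilation chain for partial programs and any trace relation ${\sim}\subseteq\mathit{Trace}_S\times\mathit{Trace}_T$ with existential and universal images $\tilde\tau,\tilde\sigma$, the following are equivalent: (i) $\mathit{RSP}^{\tilde\tau}$: for every source partial program $P$ and every $\pi_S\subseteq\mathit{Trace}_S$, $P\models_R\pi_S$ implies $P{\downarrow}\models_R(\mathit{Safe}\circ\tilde\tau)(\pi_S)$; (ii) $\mathit{RSC}^{\sim}$: for every $P$, every target context $C_T$, every target trace $t$ and every finite prefix $m\le t$, if $C_T[P{\downarrow}]\rightsquigarrow t$ then there exist a source context $C_S$, a target trace $t'\ge m$ and a source trace $s\sim t'$ with $C_S[P]\rightsquigarrow s$; (iii) $\mathit{RSP}^{\tilde\sigma}$: for every $P$ and every target safety property $\pi_T$, $P\models_R\tilde\sigma(\pi_T)$ implies $P{\downarrow}\models_R\pi_T$.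
   Context: A compilation chain for partial programs consists of source partial programs $P$ and source contexts $C_S$, target partial programs and target contexts $C_T$, linking $C[P]$ into whole programs, sets $\mathit{Trace}_S,\mathit{Trace}_T$ of traces, semantics relations $W\rightsquigarrow t$ for whole programs, and a compiler $P\mapsto P{\downarrow}$. Traces are finite or infinite sequences of events; $m\le t$ means $m$ is a finite prefix of $t$ (and $t'\ge m$ means $m\le t'$). $P\models_R\pi$ iff for every context $C$ at the same level and every $t$, $C[P]\rightsquigarrow t$ implies $t\in\pi$. A target property $\pi$ is a safety property iff for every $t\notin\pi$ there is $m\le t$ such that every $t'$ with $m\le t'$ satisfies $t'\notin\pi$. $\mathit{Safe}(\pi)$ is the intersection of all target safety properties containing $\pi$. The existential image of $\sim$ is $\tilde\tau(\pi)=\{t\mid\exists s.\ s\sim t\wedge s\in\pi\}$ and its universal image is $\tilde\sigma(\pi)=\{s\mid\forall t.\ s\sim t\Rightarrow t\in\pi\}$. *)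

From Stdlib Require Import List.
Import ListNotations.
Set Implicit Arguments.

CoInductive trace (E : Type) : Type :=
| tnil : trace E
| tcons : E -> trace E -> trace E.
Arguments tnil {E}.

(* Finite prefixes are finite lists of events; [prefix m t] is  m <= t. *)
Inductive prefix (E : Type) : list E -> trace E -> Prop :=
| prefix_nil : forall t, prefix [] t
| prefix_cons : forall e m t, prefix m t -> prefix (e :: m) (tcons e t).

Record chain : Type := {
  EvS : Type;  EvT : Type;
  ProgS : Type; CtxS : Type; WholeS : Type;
  ProgT : Type; CtxT : Type; WholeT : Type;
  linkS : CtxS -> ProgS -> WholeS;
  linkT : CtxT -> ProgT -> WholeT;
  semS : WholeS -> trace EvS -> Prop;
  semT : WholeT -> trace EvT -> Prop;
  compile : ProgS -> ProgT
}.

Definition prop (E : Type) := trace E -> Prop.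

Definition rsatS {c : chain} (P : ProgS c) (pi : prop (EvS c)) : Prop :=
  forall (C : CtxS c) (t : trace (EvS c)), semS c (linkS c C P) t -> pi t.
Definition rsatT {c : chain} (P : ProgT c) (pi : prop (EvT c)) : Prop :=
  forall (C : CtxT c) (t : trace (EvT c)), semT c (linkT c C P) t -> pi t.

Definition safety (E : Type) (pi : prop E) : Prop :=
  forall t, ~ pi t -> exists m, prefix m t /\ forall t', prefix m t' -> ~ pi t'.

Definition Safe (E : Type) (pi : prop E) : prop E :=
  fun t => forall piT : prop E, safety piT -> (forall u, pi u -> piT u) -> piT t.

Definition tau_img (ES ET : Type) (rel : trace ES -> trace ET -> Prop)
  (pi : prop ES) : prop ET := fun t => exists s, rel s t /\ pi s.
Definition sigma_img (ES ET : Type) (rel : trace ES -> trace ET -> Prop)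
  (pi : prop ET) : prop ES := fun s => forall t, rel s t -> pi t.

Definition RSP_tau (c : chain) (rel : trace (EvS c) -> trace (EvT c) -> Prop) : Prop :=
  forall (P : ProgS c) (piS : prop (EvS c)),
    rsatS (c:=c) P piS -> rsatT (c:=c) (compile c P) (Safe (tau_img rel piS)).

Definition RSC (c : chain) (rel : trace (EvS c) -> trace (EvT c) -> Prop) : Prop :=
  forall (P : ProgS c) (CT : CtxT c) (t : trace (EvT c)) (m : list (EvT c)),
    prefix m t -> semT c (linkT c CT (compile c P)) t ->
    exists (CS : CtxS c) (t' : trace (EvT c)) (s : trace (EvS c)),
      prefix m t' /\ rel s t' /\ semS c (linkS c CS P) s.

Definition RSP_sigma (c : chain) (rel : trace (EvS c) -> trace (EvT c) -> Prop) : Prop :=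
  forall (P : ProgS c) (piT : prop (EvT c)),
    safety piT -> rsatS (c:=c) P (sigma_img rel piT) -> rsatT (c:=c) (compile c P) piT.

(** All three criteria are statements about the robust behaviours [behS P]
    of a source program, i.e. the traces it produces in some source context.
    Since [Safe] is the prefix closure, [RSC] says exactly that [P↓] robustly
    satisfies [Safe (tau_img rel (behS P))].  This is what [RSP_tau] yields
    for [behS P], the strongest property [P] robustly satisfies, and it is
    also the strongest safety property [RSP_sigma] can conclude, because
    [tau_img rel] and [sigma_img rel] form a Galois connection. *)

From Stdlib Require Import Classical.

Set Implicit Arguments.
Unset Strict Implicit.

Section Safety.

Variable E : Type.

Lemma not_prefix_safety (m : list E) : safety (fun t => ~ prefix m t).
Proof.
  intros t Ht. apply NNPP in Ht.
  exists m. split; [exact Ht | tauto].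
Qed.

Lemma safety_closed (pi : prop E) (t : trace E) :
  safety pi ->
  (forall m, prefix m t -> exists t', prefix m t' /\ pi t') -> pi t.
Proof.
  intros Hsafe Hprefixes. apply NNPP; intro Hnot.
  destruct (Hsafe t Hnot) as [m [Hm Hbad]].
  destruct (Hprefixes m Hm) as [t' [Hm' Ht']].
  exact (Hbad t' Hm' Ht').
Qed.

Lemma Safe_iff (pi : prop E) (t : trace E) :
  Safe pi t <-> forall m, prefix m t -> exists t', prefix m t' /\ pi t'.
Proof.
  split.
  - intros Ht m Hm. apply NNPP; intro Hnone.
    apply (Ht _ (not_prefix_safety (m:=m))); [| exact Hm].
    intros u Hu Hmu. apply Hnone. exists u. tauto.
  - intros Hprefixes piT Hsafe Hsub.
    apply (safety_closed Hsafe). intros m Hm.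
    destruct (Hprefixes m Hm) as [t' [Hm' Ht']].
    exists t'. split; [exact Hm' | exact (Hsub t' Ht')].
Qed.

Lemma Safe_extensive (pi : prop E) (t : trace E) : pi t -> Safe pi t.
Proof. intros Ht piT _ Hsub. exact (Hsub t Ht). Qed.

Lemma Safe_mono (pi pi' : prop E) :
  (forall t, pi t -> pi' t) -> forall t, Safe pi t -> Safe pi' t.
Proof.
  intros Hsub t Ht piT Hsafe Hsub'.
  apply Ht; [exact Hsafe |]. intros u Hu. exact (Hsub' u (Hsub u Hu)).
Qed.

Lemma Safe_safety_le (pi : prop E) (t : trace E) : safety pi -> Safe pi t -> pi t.
Proof. intros Hsafe Ht. exact (Ht pi Hsafe (fun _ H => H)). Qed.

Lemma safety_Safe (pi : prop E) : safety (Safe pi).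
Proof.
  intros t Ht. rewrite Safe_iff in Ht.
  apply not_all_ex_not in Ht as [m Hm].
  apply imply_to_and in Hm as [Hmt Hnone].
  exists m. split; [exact Hmt |].
  intros t' Hmt' Ht'. apply Hnone.
  exact (proj1 (Safe_iff pi t') Ht' m Hmt').
Qed.

End Safety.

Section Images.

Variables ES ET : Type.
Variable rel : trace ES -> trace ET -> Prop.

Lemma tau_img_mono (pi pi' : prop ES) :
  (forall s, pi s -> pi' s) -> forall t, tau_img rel pi t -> tau_img rel pi' t.
Proof. intros Hsub t [s [Hst Hs]]. exists s. split; [exact Hst | exact (Hsub s Hs)]. Qed.

Lemma tau_img_sigma_img (piS : prop ES) (piT : prop ET) :
  (forall t, tau_img rel piS t -> piT t) <-> (forall s, piS s -> sigma_img rel piT s).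
Proof.
  split.
  - intros Htau s Hs t Hst. apply Htau. exists s. tauto.
  - intros Hsigma t [s [Hst Hs]]. exact (Hsigma s Hs t Hst).
Qed.

End Images.

Section Chain.

Variable c : chain.
Variable rel : trace (EvS c) -> trace (EvT c) -> Prop.

Definition behS (P : ProgS c) : prop (EvS c) :=
  fun s => exists CS, semS c (linkS c CS P) s.

Lemma rsatS_behS (P : ProgS c) : rsatS P (behS P).
Proof. intros CS s Hs. exists CS. exact Hs. Qed.

Lemma rsatS_iff_behS_le (P : ProgS c) (piS : prop (EvS c)) :
  rsatS P piS <-> forall s, behS P s -> piS s.
Proof.
  split.
  - intros Hsat s [CS Hs]. exact (Hsat CS s Hs).
  - intros Hsub CS s Hs. apply Hsub. exists CS. exact Hs.
Qed.

Lemma rsatT_weaken (P : ProgT c) (pi pi' : prop (EvT c)) :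
  (forall t, pi t -> pi' t) -> rsatT P pi -> rsatT P pi'.
Proof. intros Hsub Hsat CT t Ht. exact (Hsub t (Hsat CT t Ht)). Qed.

Lemma RSC_iff_rsatT_Safe_behS :
  RSC c rel <->
  forall P, rsatT (compile c P) (Safe (tau_img rel (behS P))).
Proof.
  split.
  - intros Hrsc P CT t Ht. apply Safe_iff. intros m Hm.
    destruct (Hrsc P CT t m Hm Ht) as [CS [t' [s [Hm' [Hst Hs]]]]].
    exists t'. split; [exact Hm' |]. exists s. split; [exact Hst |]. exists CS. exact Hs.
  - intros Hsat P CT t m Hm Ht.
    destruct (proj1 (Safe_iff _ t) (Hsat P CT t Ht) m Hm)
      as [t' [Hm' [s [Hst [CS Hs]]]]].
    exists CS, t', s. tauto.
Qed.

End Chain.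

Theorem theorem5p2 (c : chain) (rel : trace (EvS c) -> trace (EvT c) -> Prop) :
  (RSP_tau c rel <-> RSC c rel) /\ (RSC c rel <-> RSP_sigma c rel).
Proof.
  rewrite !RSC_iff_rsatT_Safe_behS.
  split; split.
  - intros Hrsp P. exact (Hrsp P _ (rsatS_behS (P:=P))).
  - intros Hrsc P piS HsatS.
    rewrite rsatS_iff_behS_le in HsatS.
    apply (rsatT_weaken (Safe_mono (tau_img_mono HsatS))).
    exact (Hrsc P).
  - intros Hrsc P piT Hsafe HsatS.
    rewrite rsatS_iff_behS_le, <- tau_img_sigma_img in HsatS.
    apply (rsatT_weaken (fun t Ht => Safe_safety_le Hsafe (Safe_mono HsatS Ht))).
    exact (Hrsc P).
  - intros Hrsp P. apply Hrsp; [apply safety_Safe |].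
    apply rsatS_iff_behS_le, tau_img_sigma_img, Safe_extensive.
Qed.
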